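(* Let $\tau\subset\mathbb{Z}^n_{\ge0}$ be a B-facet and let $E\subset\mathbb{R}^n$ be a coordinate subspace such that $E\cap\tau$ is a V-face of $\tau$ contained in $E$ (so $\dim E=\dim(E\cap\tau)+1$) which is not a B-face. Let $p_E:\mathbb{Z}^n\to\mathbb{Z}^{n-\dim E}$ be the projection forgetting the coordinates belonging to $E$. Then $p_E(\tau)\subset\mathbb{Z}^{n-\dim E}_{\ge0}$ is a B-polytope.
   Context: A polytope is a finite subset of $\mathbb{Z}^n$; its dimension is the dimension of its affine span; a face of a finite set $S$ is $S\cap G$ for a face $G$ of the convex hull of $S$. A $k$-simplex is a set of $k+1$ affinely independent points; a $k$-simplex $S\subset\mathbb{Z}^m_{\ge0}$ is a B-simplex if there is an index $i$ with exactly $k$ vertices in $\{x_i=0\}$ and the remaining vertex having $x_i=1$. A B-facet in $\mathbb{Z}^n_{\ge0}$ is a finite set $\tau\subset\mathbb{Z}^n_{\ge0}$ whose affine span is a hyperplane $\{\langle a,x\rangle=b\}$ with all $a_j>0$, such that every $(n-1)$-simplex with vertices in $\tau$ is a B-simplex. A coordinate subspace is the linear span of some standard basis vectors. A face $F$ of $\tau$ is a V-face if it is contained in a coordinate subspace $E$ with $\dim E=\dim F+1$; such $F$ is a B-face if every $(\dim F)$-simplex with vertices in $F$ is a B-simplex when regarded in $\mathbb{Z}^{\dim E}_{\ge0}$ via the coordinates of $E$. A B-polytope in $\mathbb{Z}^m_{\ge0}$ is a finite set $P\subset\mathbb{Z}^m_{\ge0}$ of dimension $m$ such that every $(m-1)$-simplex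 with vertices in $P$ either is a B-simplex or has affine span containing the origin. *)

From HB Require Import structures.
From mathcomp Require Import all_boot all_order all_algebra.
From mathcomp Require Import finmap.
Set Implicit Arguments. Unset Strict Implicit. Unset Printing Implicit Defensive.
Import Order.TTheory GRing.Theory Num.Theory.
Local Open Scope ring_scope.
Local Open Scope fset_scope.

Definition pt (D : finType) := {ffun D -> int}.

Section Defs.
Variable D : finType.

Definition nonneg (x : pt D) : bool := [forall j, (0 <= x j)%R].

(* the point x as a rational vector, prefixed with a homogenizing 1 *)
Definition liftq (x : pt D) : 'rV[rat]_(1 + #|D|) :=
  row_mx (1 : 'M[rat]_1) (\row_(j < #|D|) ((x (enum_val j))%:~R : rat)).

Definition liftmx (S : {fset pt D}) : 'M[rat]_(size (enum_fset S), 1 + #|D|) :=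
  \matrix_(i < size (enum_fset S)) liftq (nth [ffun=> 0%R] (enum_fset S) i).

Definition aff_indep (S : {fset pt D}) : bool := \rank (liftmx S) == #|` S|.

Definition adim (S : {fset pt D}) : nat := (\rank (liftmx S)).-1.

Definition simplex (k : nat) (S : {fset pt D}) : Prop :=
  #|` S| = k.+1 /\ aff_indep S.

Definition in_aspan (S : {fset pt D}) (x : D -> rat) : Prop :=
  exists lam : pt D -> rat,
    \sum_(s <- S) lam s = 1 /\
    forall j, x j = \sum_(s <- S) lam s * (s j)%:~R.

Definition Bsimplex (S : {fset pt D}) : Prop :=
  exists i : D, exists2 v, v \in S &
    v i = 1 /\ forall s, s \in S -> s != v -> s i = 0.

(* F is a face of the finite set S: F = S \cap G for a face G of conv(S);
   the (nonempty) faces of conv(S) are the sets of maximizers of a linear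
   functional c (c = 0 gives conv(S) itself). *)
Definition is_face (S F : {fset pt D}) : Prop :=
  exists c : D -> rat, forall x : pt D,
    x \in F <-> (x \in S /\
      forall y, y \in S -> \sum_j c j * (y j)%:~R <= \sum_j c j * (x j)%:~R).

Definition Bfacet (tau : {fset pt D}) : Prop :=
  (forall x, x \in tau -> nonneg x) /\
  (exists (a : D -> rat) (b : rat), (forall j, 0 < a j) /\
     forall x : D -> rat, in_aspan tau x <-> \sum_j a j * x j = b) /\
  (forall S, S `<=` tau -> simplex #|D|.-1 S -> #|D| = #|` S| -> Bsimplex S).

Definition Bpolytope (P : {fset pt D}) : Prop :=
  (forall x, x \in P -> nonneg x) /\
  adim P = #|D| /\
  (forall S, S `<=` P -> simplex #|D|.-1 S -> #|D| = #|` S| ->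
     Bsimplex S \/ in_aspan S (fun _ => 0)).

(* Coordinate subspace E = span{e_i : i \in I}, dim E = #|I|. *)
Definition Ecap (I : {set D}) (S : {fset pt D}) : {fset pt D} :=
  [fset x in S | [forall j, (j \notin I) ==> (x j == 0)]].

Definition restr (I : {set D}) (x : pt D) : pt {i : D | i \in I} :=
  [ffun i => x (val i)].

Definition projE (I : {set D}) (x : pt D) : pt {i : D | i \notin I} :=
  [ffun i => x (val i)].

End Defs.

Definition Bface_in (D : finType) (I : {set D}) (F : {fset pt D}) : Prop :=
  forall S, S `<=` F -> simplex (adim F) S -> Bsimplex [fset restr I x | x in S].

From HB Require Import structures.
From mathcomp Require Import all_boot all_order all_algebra.
From mathcomp Require Import finmap.
From Stdlib Require Import Classical.
Set Implicit Arguments. Unset Strict Implicit. Unset Printing Implicit Defensive.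
Import Order.TTheory GRing.Theory Num.Theory.

(* Write F = E ∩ τ, m = n - dim E, and let the B-facet τ span the hyperplane
   a.x = b with all a_j > 0.  Full dimensionality of p_E(τ): every point of
   Q^m lifts to that hyperplane by adjusting one coordinate in E.
   Simplices: since F is not a B-face, it contains a (dim E - 1)-simplex S that
   is not a B-simplex in the coordinates of E.  Let Q be an (m-1)-simplex of
   p_E(τ) whose affine span avoids 0, and lift each point of Q to τ.  Together
   with S these are n affinely independent points of τ (S vanishes off E and 0
   is not in the affine span of Q), hence a B-simplex, with index i and
   distinguished vertex v.  If i is not a coordinate of E, v is a lift and Q is
   a B-simplex.  If it is, either v ∈ S and S is a B-simplex in E, or S lies in
   the (dim E - 1)-dimensional coordinate space of E without e_i and in the
   hyperplane a.x = b, where b > 0 because v_i = 1: too small a space for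
   dim E affinely independent points. *)

Section BigFsetU.
Variables (R : Type) (idx : R) (op : Monoid.com_law idx) (K : choiceType).

Lemma big_fsetU_disjoint (A B : {fset K}) (F : K -> R) : [disjoint A & B]%fset ->
  \big[op/idx]_(x <- (A `|` B)%fset) F x =
  op (\big[op/idx]_(x <- A) F x) (\big[op/idx]_(x <- B) F x).
Proof.
move=> /fdisjointP AB; rewrite -big_cat; apply: perm_big; apply: uniq_perm.
- exact: fset_uniq.
- by rewrite cat_uniq !fset_uniq /= andbT; apply/hasPn => x xB; apply: contraL xB => /AB.
- by move=> x; rewrite mem_cat in_fsetU.
Qed.
End BigFsetU.

Local Open Scope fset_scope.
Local Open Scope ring_scope.

Section LiftedPoints.
Variable D : finType.
Let x0 : pt D := [ffun=> 0].

Lemma big_fset_nth (S : {fset pt D}) (F : pt D -> rat) :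
  \sum_(s <- S) F s = \sum_(i < #|`S|) F (nth x0 S i).
Proof. by rewrite (big_nth x0) big_mkord. Qed.

Lemma liftq_lshift (x : pt D) (c : 'I_1) : liftq x 0 (lshift #|D| c) = 1.
Proof. by rewrite /liftq row_mxEl ord1 mxE. Qed.

Lemma liftq_rshift (x : pt D) j : liftq x 0 (rshift 1 j) = (x (enum_val j))%:~R.
Proof. by rewrite /liftq row_mxEr mxE. Qed.

Lemma liftmxE S i : row i (liftmx S) = liftq (nth x0 S i).
Proof. by rewrite rowK. Qed.

Lemma liftmx_lshift S i (c : 'I_1) : liftmx S i (lshift #|D| c) = 1.
Proof. by rewrite mxE liftq_lshift. Qed.

Lemma liftmx_rshift S i j : liftmx S i (rshift 1 j) = ((nth x0 S i) (enum_val j))%:~R.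
Proof. by rewrite mxE liftq_rshift. Qed.

Lemma mulmx_liftmx_eq0 S (u : 'rV_(#|`S|)) :
  u *m liftmx S = 0 <-> \sum_i u 0 i = 0 /\
    forall j : 'I_#|D|, \sum_i u 0 i * ((nth x0 S i) (enum_val j))%:~R = 0.
Proof.
have entry c : (u *m liftmx S) 0 c = \sum_i u 0 i * liftmx S i c by rewrite mxE.
split=> [u0|[sum1 sumj]].
  split=> [|j].
    have := entry (lshift _ (0 : 'I_1)); rewrite u0 mxE => /esym E.
    by apply: etrans E; apply: eq_bigr => i _; rewrite liftmx_lshift mulr1.
  have := entry (rshift 1 j); rewrite u0 mxE => /esym E.
  by apply: etrans E; apply: eq_bigr => i _; rewrite liftmx_rshift.
apply/rowP => c; rewrite entry mxE; have := splitK c; case: split => [c0|j] <-.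
  by rewrite -[RHS]sum1; under eq_bigr do rewrite liftmx_lshift mulr1.
by rewrite -[RHS](sumj j); under eq_bigr do rewrite liftmx_rshift.
Qed.

Lemma aff_indepP S : aff_indep S <-> forall lam : pt D -> rat,
  \sum_(s <- S) lam s = 0 -> (forall j, \sum_(s <- S) lam s * (s j)%:~R = 0) ->
  forall s, s \in S -> lam s = 0.
Proof.
split=> [S_indep lam sum1 sumj s sS|S_indep].
  pose u : 'rV_(#|`S|) := \row_i lam (nth x0 S i).
  have /(row_free_inj S_indep) : u *m liftmx S = 0 *m liftmx S.
    rewrite mul0mx; apply/mulmx_liftmx_eq0; split=> [|j].
      by rewrite -[RHS]sum1 big_fset_nth; apply: eq_bigr => i _; rewrite mxE.
    rewrite -[RHS](sumj (enum_val j)) big_fset_nth.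
    by apply: eq_bigr => i _; rewrite mxE.
  move/rowP/(_ (Ordinal (etrans (index_mem s S) sS))).
  by rewrite !mxE nth_index.
apply/inj_row_free => u /mulmx_liftmx_eq0 [sum1 sumj].
pose lam (s : pt D) : rat := nth 0 [seq u 0 i | i <- enum 'I_#|`S|] (index s S).
have lamE (i : 'I_#|`S|) : lam (nth x0 S i) = u 0 i.
  rewrite /lam index_uniq ?fset_uniq //.
  by rewrite (nth_map i) ?size_enum_ord // nth_ord_enum.
have lam0 : forall s, s \in S -> lam s = 0.
  apply: S_indep => [|j].
    by rewrite big_fset_nth -[RHS]sum1; apply: eq_bigr => i _; rewrite lamE.
  rewrite big_fset_nth -[RHS](sumj (enum_rank j)).
  by apply: eq_bigr => i _; rewrite lamE enum_rankK.
by apply/rowP => i; rewrite mxE -lamE lam0 // mem_nth.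
Qed.

Lemma big_fset_delta (S : {fset pt D}) x (F : pt D -> rat) : x \in S ->
  \sum_(s <- S) (s == x)%:R * F s = F x.
Proof.
move=> xS; rewrite (big_fsetD1 x) //= eqxx mul1r big1_fset ?addr0 // => s.
by rewrite !inE => /andP[/negbTE -> _] _; rewrite mul0r.
Qed.

Lemma in_aspan_mem (S : {fset pt D}) x : x \in S -> in_aspan S (fun j => (x j)%:~R).
Proof.
move=> xS; exists (fun s => (s == x)%:R); split=> [|j].
  by rewrite -[RHS](big_fset_delta (fun _ => 1) xS); apply: eq_bigr => s _; rewrite mulr1.
by rewrite (big_fset_delta (fun s => (s j)%:~R) xS).
Qed.

(* On the hyperplane [a.x = b] with [b != 0] the homogenizing coordinate is a
   linear form [1 = sum_j (a j / b) x j], so the lifted points supported on [J]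
   span a space of dimension at most [#|J|]. *)
Lemma rank_liftmx_supported (S : {fset pt D}) (J : {set D}) (a : D -> rat) b :
  b != 0 -> (forall s, s \in S -> forall j, j \notin J -> s j = 0) ->
  (forall s, s \in S -> \sum_j a j * (s j)%:~R = b) ->
  (\rank (liftmx S) <= #|J|)%N.
Proof.
move=> b0 S_J S_ab.
pose W : 'M[rat]_(#|J|, 1 + #|D|) := \matrix_k
  row_mx ((a (enum_val k) / b)%:M) (\row_c ((enum_val (A:=D) c == enum_val k)%:R)).
suff /mxrankS/leq_trans : (liftmx S <= W)%MS by apply; exact: rank_leq_row.
apply/row_subP => i; rewrite liftmxE.
set s := nth x0 S i; have sS : s \in S by exact: mem_nth.
have sum_J (G : D -> rat) :
    \sum_(k < #|J|) (s (enum_val k))%:~R * G (enum_val k) = \sum_j (s j)%:~R * G j.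
  rewrite -(big_enum_val (fun j => (s j)%:~R * G j)) /= big_mkcond /=.
  by apply: eq_bigr => j _; case: ifP => // /negbT /S_J -> //; rewrite mul0r.
suff -> : liftq s = (\row_k (s (enum_val k))%:~R) *m W by exact: submxMl.
apply/rowP => c; rewrite [RHS]mxE; under eq_bigr do rewrite !mxE.
have := splitK c; case: split => [c0|j] <- /=.
  rewrite liftq_lshift.
  rewrite ord1; under eq_bigr do rewrite mxE eqxx mulr1n.
  rewrite (sum_J (fun j => a j / b)).
  transitivity ((\sum_j a j * (s j)%:~R) / b); first by rewrite S_ab ?divff.
  by rewrite mulr_suml; apply: eq_bigr => j _; rewrite [a j * _]mulrC mulrA.
rewrite liftq_rshift; under eq_bigr do rewrite mxE.
rewrite (sum_J (fun k => (enum_val j == k)%:R)) (bigD1 (enum_val j)) //= eqxx mulr1.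
by rewrite big1 ?addr0 // => k /negbTE; rewrite eq_sym => ->; rewrite mulr0.
Qed.

Lemma aff_indep_supported_card (S : {fset pt D}) (J : {set D}) (a : D -> rat) b :
  aff_indep S -> b != 0 -> (forall s, s \in S -> forall j, j \notin J -> s j = 0) ->
  (forall s, s \in S -> \sum_j a j * (s j)%:~R = b) -> (#|`S| <= #|J|)%N.
Proof. by move=> /eqP <-; exact: rank_liftmx_supported. Qed.

Lemma adim_spanning (P : {fset pt D}) :
  (forall y : 'rV[rat]_#|D|, (row_mx 1 y <= liftmx P)%MS) -> adim P = #|D|.
Proof.
move=> P_span.
have full (w : 'rV_(1 + #|D|)) : (w <= liftmx P)%MS.
  rewrite -(hsubmxK w).
  have -> : row_mx (lsubmx w) (rsubmx w) =
      row_mx 1 (rsubmx w) + (lsubmx w 0 0 - 1) *: row_mx 1 0.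
    rewrite scale_row_mx add_row_mx scaler0 addr0; congr row_mx.
    by apply/rowP => k; rewrite ord1 !mxE /= !mulr1n mulr1 addrC subrK.
  by apply: addmx_sub; [exact: P_span | apply: scalemx_sub; exact: P_span].
have /mxrankS : (1%:M <= liftmx P)%MS by apply/row_subP => c; exact: full.
rewrite mxrank1 /adim => rank_ge; apply/eqP; rewrite eqn_leq.
move: rank_ge (rank_leq_col (liftmx P)); case: (\rank _) => //= r.
by rewrite !add1n !ltnS => -> ->.
Qed.
End LiftedPoints.

Section BFaces.
Variable D : finType.

Lemma not_Bface_in_witness (I : {set D}) (F : {fset pt D}) : ~ Bface_in I F ->
  exists2 S, S `<=` F & simplex (adim F) S /\ ~ Bsimplex [fset restr I x | x in S].
Proof.
move=> notB; apply: NNPP => noS; apply: notB => S SF S_simplex.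
by apply: NNPP => notBS; apply: noS; exists S.
Qed.

Lemma Bsimplex_restr (I : {set D}) (S : {fset pt D}) i v : i \in I -> v \in S ->
  v i = 1 -> (forall s, s \in S -> s != v -> s i = 0) ->
  Bsimplex [fset restr I x | x in S].
Proof.
move=> iI vS vi S_i; exists (exist _ i iI), (restr I v); first exact: in_imfset.
split=> [|_ /imfsetP [s sS ->] sv]; rewrite ffunE //=.
by apply: S_i => //; apply: contraNneq sv => ->.
Qed.

Lemma mem_Ecap (I : {set D}) (tau : {fset pt D}) x :
  x \in Ecap I tau <-> x \in tau /\ forall j, j \notin I -> x j = 0.
Proof.
rewrite /Ecap !inE /=; split=> [/andP[-> /forallP x_I]|[-> x_I]].
  by split=> // j jI; apply/eqP; exact: implyP (x_I j) jI.
by apply/forallP => j; apply/implyP => /x_I ->.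
Qed.

Lemma weighted_sum_gt0 (a : D -> rat) (x : pt D) i :
  (forall j, 0 < a j) -> nonneg x -> (0 < x i)%R -> 0 < \sum_j a j * (x j)%:~R.
Proof.
move=> a_gt0 /forallP x_ge0 xi_gt0; rewrite (bigD1 i) //=.
apply: ltr_pwDl; first by rewrite mulr_gt0 // ltr0z.
by apply: sumr_ge0 => j _; rewrite mulr_ge0 ?ler0z // ltW.
Qed.
End BFaces.

Section Projection.
Variables (n : nat) (I : {set 'I_n}).
Local Notation D' := {i : 'I_n | i \notin I}.
Let x0 : pt 'I_n := [ffun=> 0].

Lemma card_coords_split : (#|I| + #|{: D'}|)%N = n.
Proof.
rewrite card_sig -[RHS](card_ord n) -(cardsC I); congr addn.
by apply: eq_card => j; rewrite !inE.
Qed.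

(* A point [y] of [Q^m] is the projection of the point of the hyperplane
   [a.x = b] agreeing with [y] off [I] and vanishing on [I] except at [i0]. *)
Lemma adim_projE_hyperplane (tau : {fset pt 'I_n}) (a : 'I_n -> rat) b i0 :
  i0 \in I -> a i0 != 0 ->
  (forall x : 'I_n -> rat, \sum_j a j * x j = b -> in_aspan tau x) ->
  adim [fset projE I x | x in tau] = #|{: D'}|.
Proof.
move=> i0I ai0 hyp_tau; apply: adim_spanning => y.
pose yv (j : 'I_n) : rat := if insub j is Some d then y 0 (enum_rank (d : D')) else 0.
pose c := (b - \sum_j a j * yv j) / a i0.
pose x (j : 'I_n) := yv j + (if j == i0 then c else 0).
have [lam [lam1 lamx]] : in_aspan tau x.
  apply: hyp_tau.
  under eq_bigr => j _ do rewrite mulrDr (fun_if (fun t => a j * t)) mulr0.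
  rewrite big_split /= -big_mkcond big_pred1_eq /c.
  by rewrite mulrC -mulrA mulVf // mulr1 addrC subrK.
have -> : row_mx 1 y = \sum_(s <- tau) lam s *: liftq (projE I s).
  apply/rowP => k; rewrite summxE.
  have := splitK k; case: split => [k1|k'] <- /=.
    rewrite row_mxEl ord1 mxE /= -lam1; apply: eq_bigr => s _.
    by rewrite mxE liftq_lshift mulr1.
  rewrite row_mxEr.
  under eq_bigr do rewrite mxE liftq_rshift ffunE.
  rewrite -lamx /x /yv valK enum_valK.
  have /negbTE -> : val (enum_val k') != i0.
    by apply: contraNneq (valP (enum_val k')) => ->.
  by rewrite addr0.
rewrite big_seq; apply: (big_ind (fun M => M <= _)%MS) => [|u v|s sT].
- exact: sub0mx.
- exact: addmx_sub.
apply: scalemx_sub.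
have /(nthP [ffun=> 0]) [k kP <-] : projE I s \in [fset projE I x | x in tau] by exact: in_imfset.
by apply: (eq_row_sub (Ordinal kP)); rewrite rowK.
Qed.

Definition projE_preim (tau : {fset pt 'I_n}) (y : pt D') : pt 'I_n :=
  nth x0 [seq x <- tau | projE I x == y] 0.

Lemma projE_preimP tau y : y \in [fset projE I x | x in tau] ->
  projE_preim tau y \in tau /\ projE I (projE_preim tau y) = y.
Proof.
move=> /imfsetP [x xT ->].
have : projE_preim tau (projE I x) \in [seq z <- tau | projE I z == projE I x].
  by apply: mem_nth; rewrite size_filter -has_count; apply/hasP; exists x.
by rewrite mem_filter => /andP[/eqP -> ->].
Qed.

Section Lifting.
Variables (S : {fset pt 'I_n}) (Q : {fset pt D'}) (lift : pt D' -> pt 'I_n).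
Hypothesis S_offI : forall s, s \in S -> forall j, j \notin I -> s j = 0.
Hypothesis liftK : forall y, y \in Q -> projE I (lift y) = y.
Hypothesis Q_off0 : ~ in_aspan Q (fun _ => 0).

Let T := S `|` [fset lift y | y in Q].

Lemma lift_inj : {in Q &, injective lift}.
Proof. by move=> y1 y2 y1Q y2Q /(congr1 (projE I)); rewrite !liftK. Qed.

Lemma disjoint_lift : [disjoint S & [fset lift y | y in Q]].
Proof.
apply/fdisjointP => s sS; apply/negP => /imfsetP [y yQ s_lift]; apply: Q_off0.
have [lam [lam1 lamy]] := in_aspan_mem yQ; exists lam; split=> // d.
rewrite -lamy; have := liftK yQ; rewrite -s_lift => <-.
by rewrite ffunE S_offI //; exact: (valP d).
Qed.

Lemma big_fsetU_lift (G : pt 'I_n -> rat) :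
  \sum_(t <- T) G t = \sum_(s <- S) G s + \sum_(y <- Q) G (lift y).
Proof. by rewrite big_fsetU_disjoint ?disjoint_lift // big_imfset //; exact: lift_inj. Qed.

Lemma card_fsetU_lift : #|`T| = (#|`S| + #|`Q|)%N.
Proof.
have := cardfsUI S [fset lift y | y in Q].
rewrite (disjoint_fsetI0 disjoint_lift) cardfs0 addn0 => ->.
by rewrite card_in_imfset //; exact: lift_inj.
Qed.

(* An affine dependency on [T] has no weight on [S] off [I]; projecting it
   shows that its weights on the lifts form a linear dependency on [Q], which
   must vanish (else normalizing it puts [0] in the affine span of [Q]); so it
   is an affine dependency on [Q], and then on [S]. *)
Lemma aff_indep_fsetU_lift : aff_indep S -> aff_indep Q -> aff_indep T.
Proof.
move=> /aff_indepP S_indep /aff_indepP Q_indep; apply/aff_indepP => lam sum1 sumj.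
have lift_coord y (d : D') : y \in Q -> ((lift y) (val d))%:~R = (y d)%:~R :> rat.
  by move=> yQ; have := congr1 (fun z : pt D' => z d) (liftK yQ); rewrite ffunE => ->.
have sumQ d : \sum_(y <- Q) lam (lift y) * (y d)%:~R = 0.
  apply: (etrans _ (sumj (val d))); rewrite big_fsetU_lift.
  rewrite [X in X + _]big1_seq ?add0r => [|s /andP[_ sS]].
    by apply: eq_big_seq => y yQ; rewrite lift_coord.
  by rewrite S_offI ?mulr0 //; exact: (valP d).
have sum1Q : \sum_(y <- Q) lam (lift y) = 0.
  apply/eqP/contraT => sum_neq0; case: Q_off0.
  exists (fun y => lam (lift y) / \sum_(y <- Q) lam (lift y)); split.
    by rewrite -mulr_suml divff.
  move=> d; under eq_bigr do rewrite mulrAC.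
  by rewrite -mulr_suml sumQ mul0r.
have lamQ := Q_indep _ sum1Q sumQ.
have lamS : forall s, s \in S -> lam s = 0.
  apply: S_indep => [|j]; [move: sum1 | move: (sumj j)];
  by rewrite big_fsetU_lift [X in _ + X]big1_seq ?addr0 // => y /andP[_ yQ]; rewrite lamQ ?mul0r.
by move=> t /fsetUP [/lamS|/imfsetP [y yQ ->]] //; exact: lamQ.
Qed.

Lemma Bsimplex_lift i v : i \notin I -> v \in T -> v i = 1 ->
  (forall t, t \in T -> t != v -> t i = 0) -> Bsimplex Q.
Proof.
move=> iI /fsetUP [vS|/imfsetP [y0 y0Q ->]] vi T_i.
  by move: vi; rewrite S_offI.
exists (exist _ i iI), y0 => //; split=> [|y yQ y_y0].
  by rewrite -(liftK y0Q) ffunE.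
rewrite -(liftK yQ) ffunE /=; apply: T_i; first by apply/fsetUP; right; exact: in_imfset.
by apply: contra_neq y_y0 => /(congr1 (projE I)); rewrite !liftK.
Qed.
End Lifting.

Lemma Bsimplex_projE (tau : {fset pt 'I_n}) : Bfacet tau ->
  #|I| = (adim (Ecap I tau)).+1 -> ~ Bface_in I (Ecap I tau) ->
  forall Q, Q `<=` [fset projE I x | x in tau] ->
  simplex #|{: D'}|.-1 Q -> #|{: D'}| = #|`Q| -> ~ in_aspan Q (fun _ => 0) ->
  Bsimplex Q.
Proof.
move=> [tau_ge0 [[a [b [a_gt0 tau_hyp]]] tau_B]] cardI notBF Q Q_proj [_ Q_indep] cardQ Q_off0.
have [S S_F [[cardS S_indep] S_notB]] := not_Bface_in_witness notBF.
have S_E s : s \in S -> s \in tau /\ forall j, j \notin I -> s j = 0.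
  by move=> /(fsubsetP S_F)/mem_Ecap.
have liftK y : y \in Q -> projE I (projE_preim tau y) = y.
  by move=> /(fsubsetP Q_proj)/projE_preimP [].
pose T := S `|` [fset projE_preim tau y | y in Q].
have S_offI s sS := (S_E s sS).2.
have T_tau : T `<=` tau.
  apply/fsubsetP => t /fsetUP [/S_E [] //|/imfsetP [y /(fsubsetP Q_proj) yP ->]].
  by have [] := projE_preimP yP.
have cardT : #|`T| = n.
  by rewrite card_fsetU_lift // cardS -cardI -cardQ card_coords_split.
have [i [v vT [vi T_i]]] : Bsimplex T.
  apply: tau_B T_tau _ _; last by rewrite card_ord cardT.
  split; last exact: aff_indep_fsetU_lift.
  by rewrite card_ord cardT prednK // -card_coords_split cardI.
have [iI|iNI] := boolP (i \in I); last exact: (Bsimplex_lift S_offI liftK iNI vT vi T_i).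
exfalso; case/fsetUP: vT => [vS|v_lift].
  by apply: S_notB; apply: (Bsimplex_restr iI vS vi) => s sS; apply: T_i; rewrite in_fsetU sS.
have on_hyp x : x \in tau -> \sum_j a j * (x j)%:~R = b by move/in_aspan_mem/tau_hyp.
have v_tau : v \in tau by rewrite (fsubsetP T_tau) // in_fsetU v_lift orbT.
have b_neq0 : b != 0.
  by rewrite -(on_hyp v v_tau) lt0r_neq0 // (weighted_sum_gt0 (i := i)) ?vi ?tau_ge0.
have S_i s : s \in S -> s i = 0.
  move=> sS; apply: T_i; first by rewrite in_fsetU sS.
  by apply: contraTneq v_lift => <-; apply: (fdisjointP (disjoint_lift S_offI liftK Q_off0)).
suff : (#|`S| <= #|I :\ i|)%N by rewrite cardS -cardI (cardsD1 i I) iI add1n ltnn.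
apply: (aff_indep_supported_card (a := a) S_indep b_neq0) => [s sS j|s /S_E [/on_hyp]] //.
by rewrite !inE negb_and negbK => /orP[/eqP ->|/S_offI -> //]; exact: S_i.
Qed.
End Projection.

Theorem lemma3p3 (n : nat) (tau : {fset pt 'I_n}) (I : {set 'I_n}) :
  Bfacet tau ->
  is_face tau (Ecap I tau) ->
  #|I| = (adim (Ecap I tau)).+1 ->
  ~ Bface_in I (Ecap I tau) ->
  Bpolytope [fset projE I x | x in tau].
Proof.
move=> tau_Bfacet _ cardI notBF.
have [tau_ge0 [[a [b [a_gt0 tau_hyp]]] _]] := tau_Bfacet.
have [i0 i0I] : exists i0, i0 \in I by apply/card_gt0P; rewrite cardI.
split; [|split].
- move=> _ /imfsetP [x xT ->]; apply/forallP => d; rewrite ffunE.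
  exact: forallP (tau_ge0 x xT) _.
- apply: (adim_projE_hyperplane (a := a) (b := b) i0I (lt0r_neq0 (a_gt0 i0))).
  by move=> x /tau_hyp.
- move=> Q Q_proj Q_simplex cardQ.
  have [|Q_off0] := classic (in_aspan Q (fun _ => 0)); [by right | left].
  exact: Bsimplex_projE cardI notBF Q Q_proj Q_simplex cardQ Q_off0.
Qed.
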